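(* Let $((A,\cdot),N)$ be a Nijenhuis algebra, $((M,\triangleright,\triangleleft),N_M)$ a Nijenhuis bimodule, and $0\to((M,0),N_M)\xrightarrow{i}((E,\cdot_E),N_E)\xrightarrow{p}((A,\cdot),N)\to0$ an abelian extension whose induced Nijenhuis bimodule structure on $M$ is the given one. Fix a linear section $s$ of $p$ and let $(\chi,F)$ be the associated 2-cocycle. Then a pair $(\beta,\alpha)\in\mathrm{Aut}(M,N_M)\times\mathrm{Aut}(A,N)$ is inducible if and only if: (I) $\beta(a\triangleright u)=\alpha(a)\triangleright\beta(u)$ and $\beta(u\triangleleft a)=\beta(u)\triangleleft\alpha(a)$ for all $a\in A$, $u\in M$; and (II) there exists a linear map $\lambda:A\to M$ with $\beta(\chi(a,b))-\chi(\alpha(a),\alpha(b))=\alpha(a)\triangleright\lambda(b)+\lambda(a)\triangleleft\alpha(b)-\lambda(a\cdot b)$ and $\beta(F(a))-F(\alpha(a))=N_M(\lambda(a))-\lambda(N(a))$ for all $a,b\in A$.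
   Context: Over a field of characteristic $0$. Nijenhuis algebra: associative $(A,\cdot)$ with linear $N$, $N(a)N(b)=N(N(a)b+aN(b)-N(ab))$; homomorphisms are algebra maps commuting with the operators. Nijenhuis bimodule: $A$-bimodule with linear $N_M$ such that $N(a)\triangleright N_M(u)=N_M(N(a)\triangleright u+a\triangleright N_M(u)-N_M(a\triangleright u))$ and $N_M(u)\triangleleft N(a)=N_M(N_M(u)\triangleleft a+u\triangleleft N(a)-N_M(u\triangleleft a))$. An abelian extension is a Nijenhuis algebra $((E,\cdot_E),N_E)$ with a short exact sequence of Nijenhuis algebra homomorphisms as displayed, $M$ having zero multiplication; identify $M$ with $i(M)$. Its induced bimodule structure is $a\triangleright u=s(a)\cdot_Eu$, $u\triangleleft a=u\cdot_Es(a)$ for any section $s$. For the section $s$, $\chi(a,b)=s(a)\cdot_Es(b)-s(a\cdot b)\in M$ and $F(a)=N_E(s(a))-s(N(a))\in M$. $\mathrm{Aut}(A,N)$: algebra automorphisms of $A$ commuting with $N$; $\mathrm{Aut}(M,N_M)$: linear bijections $\beta:M\to M$ with $\beta N_M=N_M\beta$; $\mathrm{Aut}_M(E,N_E)$: Nijenhuis algebra automorphisms $\varphi$ of $E$ with $\varphi(M)\subseteq M$. For such $\varphi$, $\tau(\varphi)=(\varphi|_M,\ p\varphi s)\in\mathrm{Aut}(M,N_M)\times\mathrm{Aut}(A,N)$ (independent of $s$). A pair $(\beta,\alpha)$ is inducible if $(\beta,\alpha)=\tau(\varphi)$ for some $\varphi\in\mathrm{Aut}_M(E,N_E)$. *)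

(* Vector spaces over a field K of characteristic 0 are
   modelled as lmodType K; (possibly non-unital) associative algebras are
   given by an explicit bilinear associative multiplication. *)
From HB Require Import structures.
From mathcomp Require Import all_boot all_order all_algebra.
Set Implicit Arguments. Unset Strict Implicit. Unset Printing Implicit Defensive.
Import GRing.Theory.
Local Open Scope ring_scope.

Section Defs.
Variable K : fieldType.

Definition is_linear (U V : lmodType K) (f : U -> V) : Prop :=
  forall (k : K) (x y : U), f (k *: x + y) = k *: f x + f y.

Definition assoc_alg (A : lmodType K) (mul : A -> A -> A) : Prop :=
  [/\ forall b, is_linear (fun a => mul a b),
      forall a, is_linear (fun b => mul a b) &
      forall a b c, mul (mul a b) c = mul a (mul b c)].

Definition nijenhuis_alg (A : lmodType K) (mul : A -> A -> A) (N : A -> A) : Prop :=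
  [/\ assoc_alg mul, is_linear N &
      forall a b, mul (N a) (N b) = N (mul (N a) b + mul a (N b) - N (mul a b))].

(* A-bimodule (M, l, r) : l a u = a |> u, r u a = u <| a *)
Definition bimodule (A M : lmodType K) (mul : A -> A -> A)
  (l : A -> M -> M) (r : M -> A -> M) : Prop :=
  [/\ forall u, is_linear (fun a => l a u), forall a, is_linear (l a),
      forall a, is_linear (fun u => r u a), forall u, is_linear (r u) &
      [/\ forall a b u, l (mul a b) u = l a (l b u),
          forall a b u, r u (mul a b) = r (r u a) b &
          forall a b u, l a (r u b) = r (l a u) b]].

Definition nijenhuis_bimodule (A M : lmodType K) (mul : A -> A -> A) (N : A -> A)
  (l : A -> M -> M) (r : M -> A -> M) (NM : M -> M) : Prop :=
  [/\ bimodule mul l r, is_linear NM,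
      forall a u, l (N a) (NM u) = NM (l (N a) u + l a (NM u) - NM (l a u)) &
      forall a u, r (NM u) (N a) = NM (r (NM u) a + r u (N a) - NM (r u a))].

(* Abelian extension 0 -> ((M,0),NM) -i-> ((E,mulE),NE) -p-> ((A,mul),N) -> 0:
   (E,mulE,NE) is a Nijenhuis algebra, i and p are Nijenhuis algebra
   homomorphisms (M carrying the zero multiplication), i injective,
   p surjective, and ker p = im i. *)
Definition abelian_extension (A M E : lmodType K) (mul : A -> A -> A) (N : A -> A)
  (NM : M -> M) (mulE : E -> E -> E) (NE : E -> E) (i : M -> E) (p : E -> A) : Prop :=
  [/\ nijenhuis_alg mulE NE, is_linear i, is_linear p,
      [/\ forall u v, mulE (i u) (i v) = i 0, forall u, NE (i u) = i (NM u),
          forall x y, p (mulE x y) = mul (p x) (p y) &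
          forall x, p (NE x) = N (p x)] &
      [/\ injective i, forall a, exists x, p x = a &
          forall x, p x = 0 <-> exists u, x = i u]].

Definition linear_section (A E : lmodType K) (p : E -> A) (s : A -> E) : Prop :=
  is_linear s /\ forall a, p (s a) = a.

Definition nijenhuis_alg_aut (A : lmodType K) (mul : A -> A -> A) (N : A -> A)
  (alpha : A -> A) : Prop :=
  [/\ is_linear alpha, bijective alpha,
      forall a b, alpha (mul a b) = mul (alpha a) (alpha b) &
      forall a, alpha (N a) = N (alpha a)].

Definition nijenhuis_mod_aut (M : lmodType K) (NM : M -> M) (beta : M -> M) : Prop :=
  [/\ is_linear beta, bijective beta & forall u, beta (NM u) = NM (beta u)].

Definition aut_M (M E : lmodType K) (mulE : E -> E -> E) (NE : E -> E)
  (i : M -> E) (phi : E -> E) : Prop :=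
  nijenhuis_alg_aut mulE NE phi /\ forall u, exists v, phi (i u) = i v.

(* (beta, alpha) is inducible: (beta, alpha) = tau(phi) = (phi|_M, p phi s) *)
Definition inducible (A M E : lmodType K) (mulE : E -> E -> E) (NE : E -> E)
  (i : M -> E) (p : E -> A) (s : A -> E) (beta : M -> M) (alpha : A -> A) : Prop :=
  exists phi : E -> E, aut_M mulE NE i phi /\
    (forall u, phi (i u) = i (beta u)) /\ (forall a, p (phi (s a)) = alpha a).

End Defs.

From HB Require Import structures.
From mathcomp Require Import all_boot all_order all_algebra.
Import GRing.Theory.
Local Open Scope ring_scope.

Set Implicit Arguments.
Unset Strict Implicit.
Unset Printing Implicit Defensive.

(* The section s splits E as s(A) + M, uniquely.  If phi is an automorphism
   with tau(phi) = (beta, alpha), then phi(s a + u) = s(alpha a) + lam a + beta u,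
   where lam a is the M-component of phi(s a); conversely, for every linear lam
   this formula is a linear bijection of E.  Such a map is multiplicative iff it
   is so on the generators: on s(A) x M and M x s(A) this is condition (I), and on
   s(A) x s(A), where products are computed through chi, it is the chi-part of
   (II).  Likewise it commutes with N_E iff it does on s(A), which is the
   F-part of (II).  Neither the Nijenhuis identities nor the characteristic
   play a role. *)

Lemma subr_eq_sub (V : zmodType) (x y z w : V) : x - y = z - w <-> w + x = y + z.
Proof.
split=> [xy | wx]; first by rewrite -[x](subrK y) xy addrCA addrA subrK addrC.
by apply/eqP; rewrite subr_eq addrAC (addrC z) -wx addrC addKr.
Qed.

Section LinearMaps.
Variables (K : fieldType) (U V W : lmodType K).

Lemma is_linearD (f : U -> V) : is_linear f -> forall x y, f (x + y) = f x + f y.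
Proof. by move=> f_lin x y; have := f_lin 1 x y; rewrite !scale1r. Qed.

Lemma is_linear0 (f : U -> V) : is_linear f -> f 0 = 0.
Proof. by move=> f_lin; apply: (addrI (f 0)); rewrite -is_linearD // !addr0. Qed.

Lemma is_linearN (f : U -> V) : is_linear f -> forall x, f (- x) = - f x.
Proof.
by move=> f_lin x; apply/eqP; rewrite -addr_eq0 -is_linearD // addNr is_linear0.
Qed.

Lemma is_linearB (f : U -> V) : is_linear f -> forall x y, f (x - y) = f x - f y.
Proof. by move=> f_lin x y; rewrite is_linearD // is_linearN. Qed.

Lemma is_linear_comp (g : V -> W) (f : U -> V) :
  is_linear g -> is_linear f -> is_linear (fun x => g (f x)).
Proof. by move=> g_lin f_lin k x y; rewrite f_lin g_lin. Qed.

Lemma is_linear_add (f g : U -> V) :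
  is_linear f -> is_linear g -> is_linear (fun x => f x + g x).
Proof. by move=> f_lin g_lin k x y; rewrite f_lin g_lin scalerDr addrACA. Qed.

End LinearMaps.

Section AbelianExtension.
Variables (K : fieldType) (A M E : lmodType K).
Variables (mul : A -> A -> A) (N : A -> A) (l : A -> M -> M) (r : M -> A -> M).
Variables (NM : M -> M) (mulE : E -> E -> E) (NE : E -> E).
Variables (i : M -> E) (p : E -> A) (s : A -> E) (chi : A -> A -> M) (F : A -> M).

Hypotheses (mulE_linl : forall b, is_linear (fun a => mulE a b))
           (mulE_linr : forall a, is_linear (fun b => mulE a b)).
Hypotheses (NE_lin : is_linear NE) (i_lin : is_linear i) (p_lin : is_linear p).
Hypotheses (s_lin : is_linear s) (p_s : forall a, p (s a) = a).
Hypotheses (i_inj : injective i) (ker_p : forall x, p x = 0 <-> exists u, x = i u).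
Hypotheses (mulE_ii : forall u v, mulE (i u) (i v) = i 0)
           (NE_i : forall u, NE (i u) = i (NM u)).
Hypotheses (mulE_si : forall a u, mulE (s a) (i u) = i (l a u))
           (mulE_is : forall a u, mulE (i u) (s a) = i (r u a)).
Hypotheses (chi_def : forall a b, i (chi a b) = mulE (s a) (s b) - s (mul a b))
           (F_def : forall a, i (F a) = NE (s a) - s (N a)).

Let mulEDl x y z : mulE (x + y) z = mulE x z + mulE y z.
Proof. exact: is_linearD (mulE_linl z) x y. Qed.

Let mulEDr x y z : mulE x (y + z) = mulE x y + mulE x z.
Proof. exact: is_linearD (mulE_linr x) y z. Qed.

Lemma mulE_ii0 u v : mulE (i u) (i v) = 0.
Proof. by rewrite mulE_ii is_linear0. Qed.

Lemma mpart_subproof x : exists u, i u == x - s (p x).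
Proof.
have /ker_p[u ->] : p (x - s (p x)) = 0 by rewrite is_linearB // p_s subrr.
by exists u.
Qed.

Definition mpart x := xchoose (mpart_subproof x).

Lemma decompE x : s (p x) + i (mpart x) = x.
Proof. by rewrite (eqP (xchooseP (mpart_subproof x))) addrC subrK. Qed.

Lemma p_decomp a u : p (s a + i u) = a.
Proof.
have p_i : p (i u) = 0 by apply/ker_p; exists u.
by rewrite is_linearD // p_s p_i addr0.
Qed.

Lemma mpart_decomp a u : mpart (s a + i u) = u.
Proof. by move: (decompE (s a + i u)); rewrite p_decomp => /addrI/i_inj. Qed.

Lemma mpart_lin : is_linear mpart.
Proof.
move=> k x y; rewrite -{1}(decompE x) -{1}(decompE y).
by rewrite scalerDr addrACA -s_lin -i_lin mpart_decomp.
Qed.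

Lemma mulE_ss a b : mulE (s a) (s b) = s (mul a b) + i (chi a b).
Proof. by rewrite chi_def addrC subrK. Qed.

Lemma NE_s a : NE (s a) = s (N a) + i (F a).
Proof. by rewrite F_def addrC subrK. Qed.

Lemma mulE_decomp_i a u v : mulE (s a + i u) (i v) = i (l a v).
Proof. by rewrite mulEDl mulE_si mulE_ii0 addr0. Qed.

Lemma mulE_i_decomp a u v : mulE (i v) (s a + i u) = i (r v a).
Proof. by rewrite mulEDr mulE_is mulE_ii0 addr0. Qed.

Lemma mulE_decomp a u b v :
  mulE (s a + i u) (s b + i v) = s (mul a b) + i (chi a b + (l a v + r u b)).
Proof.
rewrite mulEDr mulE_decomp_i mulEDl mulE_ss mulE_is !(is_linearD i_lin) -!addrA.
by rewrite (addrC (i (r u b))).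
Qed.

Lemma NE_decomp a u : NE (s a + i u) = s (N a) + i (F a + NM u).
Proof. by rewrite is_linearD // NE_s NE_i is_linearD // addrA. Qed.

Lemma mulE_morph_decomp (phi : E -> E) : is_linear phi ->
  (forall a b, phi (mulE (s a) (s b)) = mulE (phi (s a)) (phi (s b))) ->
  (forall a u, phi (mulE (s a) (i u)) = mulE (phi (s a)) (phi (i u))) ->
  (forall a u, phi (mulE (i u) (s a)) = mulE (phi (i u)) (phi (s a))) ->
  (forall u v, phi (mulE (i u) (i v)) = mulE (phi (i u)) (phi (i v))) ->
  forall x y, phi (mulE x y) = mulE (phi x) (phi y).
Proof.
move=> phi_lin phi_ss phi_si phi_is phi_ii x y.
rewrite -(decompE x) -(decompE y) !(mulEDl, mulEDr, is_linearD phi_lin).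
by rewrite phi_ss phi_si phi_is phi_ii.
Qed.

Lemma NE_morph_decomp (phi : E -> E) : is_linear phi ->
  (forall a, phi (NE (s a)) = NE (phi (s a))) ->
  (forall u, phi (NE (i u)) = NE (phi (i u))) ->
  forall x, phi (NE x) = NE (phi x).
Proof.
move=> phi_lin phi_s phi_i x.
by rewrite -(decompE x) !(is_linearD NE_lin, is_linearD phi_lin) phi_s phi_i.
Qed.

Section ExtensionMap.
Variables (alpha : A -> A) (lam : A -> M) (beta : M -> M).

Definition ext_map x := s (alpha (p x)) + i (lam (p x) + beta (mpart x)).

Definition compatible_pair :=
  (forall a u, beta (l a u) = l (alpha a) (beta u)) /\
  (forall a u, beta (r u a) = r (beta u) (alpha a)).

Definition cobounds_chi := forall a b,
  beta (chi a b) - chi (alpha a) (alpha b)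
  = l (alpha a) (lam b) + r (lam a) (alpha b) - lam (mul a b).

Definition cobounds_F := forall a, beta (F a) - F (alpha a) = NM (lam a) - lam (N a).

Lemma ext_map_decomp a u : ext_map (s a + i u) = s (alpha a) + i (lam a + beta u).
Proof. by rewrite /ext_map p_decomp mpart_decomp. Qed.

Lemma ext_map_bij : bijective alpha -> bijective beta -> bijective ext_map.
Proof.
case=> alpha' alphaK alpha'K [beta' betaK beta'K].
exists (fun x => s (alpha' (p x)) + i (beta' (mpart x - lam (alpha' (p x))))) => x.
  by rewrite /ext_map p_decomp mpart_decomp alphaK addrAC subrr add0r betaK decompE.
by rewrite ext_map_decomp alpha'K beta'K subrKC decompE.
Qed.

Hypotheses (alpha_lin : is_linear alpha) (lam_lin : is_linear lam)
           (beta_lin : is_linear beta).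

Lemma ext_map_lin : is_linear ext_map.
Proof.
apply: is_linear_add; first exact: is_linear_comp s_lin (is_linear_comp alpha_lin p_lin).
apply: (is_linear_comp i_lin).
exact: is_linear_add (is_linear_comp lam_lin p_lin) (is_linear_comp beta_lin mpart_lin).
Qed.

Lemma ext_map_s a : ext_map (s a) = s (alpha a) + i (lam a).
Proof.
by rewrite -[s a]addr0 -(is_linear0 i_lin) ext_map_decomp is_linear0 // addr0.
Qed.

Lemma ext_map_i u : ext_map (i u) = i (beta u).
Proof.
rewrite -[i u]add0r -(is_linear0 s_lin) ext_map_decomp.
by rewrite !is_linear0 // !add0r.
Qed.

Section Multiplicative.
Hypothesis alpha_mul : forall a b, alpha (mul a b) = mul (alpha a) (alpha b).

Lemma ext_map_mul_ss a b :
  ext_map (mulE (s a) (s b)) = mulE (ext_map (s a)) (ext_map (s b)) <->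
  beta (chi a b) - chi (alpha a) (alpha b)
  = l (alpha a) (lam b) + r (lam a) (alpha b) - lam (mul a b).
Proof.
rewrite mulE_ss ext_map_decomp !ext_map_s mulE_decomp alpha_mul.
split=> [/(congr1 mpart) | /subr_eq_sub <- //].
by rewrite !mpart_decomp => /subr_eq_sub.
Qed.

Lemma ext_map_mul_si a u :
  ext_map (mulE (s a) (i u)) = mulE (ext_map (s a)) (ext_map (i u)) <->
  beta (l a u) = l (alpha a) (beta u).
Proof. by rewrite mulE_si !ext_map_i ext_map_s mulE_decomp_i; split=> [/i_inj|->]. Qed.

Lemma ext_map_mul_is a u :
  ext_map (mulE (i u) (s a)) = mulE (ext_map (i u)) (ext_map (s a)) <->
  beta (r u a) = r (beta u) (alpha a).
Proof. by rewrite mulE_is !ext_map_i ext_map_s mulE_i_decomp; split=> [/i_inj|->]. Qed.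

Lemma ext_map_mulP :
  (forall x y, ext_map (mulE x y) = mulE (ext_map x) (ext_map y)) <->
  compatible_pair /\ cobounds_chi.
Proof.
split=> [ext_mul | [[compat_l compat_r] chi_cob]].
  split; [split=> a u | move=> a b].
  - exact/ext_map_mul_si.
  - exact/ext_map_mul_is.
  - exact/ext_map_mul_ss.
apply: mulE_morph_decomp; first exact: ext_map_lin.
- by move=> a b; apply/ext_map_mul_ss.
- by move=> a u; apply/ext_map_mul_si.
- by move=> a u; apply/ext_map_mul_is.
by move=> u v; rewrite !ext_map_i !mulE_ii0 (is_linear0 ext_map_lin).
Qed.

End Multiplicative.

Section NijenhuisOperator.
Hypotheses (alpha_N : forall a, alpha (N a) = N (alpha a))
           (beta_NM : forall u, beta (NM u) = NM (beta u)).

Lemma ext_map_NE_s a :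
  ext_map (NE (s a)) = NE (ext_map (s a)) <->
  beta (F a) - F (alpha a) = NM (lam a) - lam (N a).
Proof.
rewrite NE_s ext_map_decomp ext_map_s NE_decomp alpha_N.
split=> [/(congr1 mpart) | /subr_eq_sub <- //].
by rewrite !mpart_decomp => /subr_eq_sub.
Qed.

Lemma ext_map_NEP :
  (forall x, ext_map (NE x) = NE (ext_map x)) <-> cobounds_F.
Proof.
split=> [ext_NE a | F_cob]; first exact/ext_map_NE_s.
apply: NE_morph_decomp => [|a|u]; first exact: ext_map_lin.
  exact/ext_map_NE_s.
by rewrite NE_i !ext_map_i NE_i beta_NM.
Qed.

End NijenhuisOperator.
End ExtensionMap.

Lemma aut_ext_mapE (alpha : A -> A) (beta : M -> M) (phi : E -> E) :
    is_linear phi -> (forall u, phi (i u) = i (beta u)) ->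
    (forall a, p (phi (s a)) = alpha a) ->
  phi =1 ext_map alpha (fun a => mpart (phi (s a))) beta.
Proof.
move=> phi_lin phi_i phi_s x; rewrite -{1}(decompE x) is_linearD // phi_i.
by rewrite -{1}(decompE (phi (s (p x)))) phi_s /ext_map is_linearD // addrA.
Qed.

Lemma inducibleP (alpha : A -> A) (beta : M -> M) :
    nijenhuis_mod_aut NM beta -> nijenhuis_alg_aut mul N alpha ->
  inducible mulE NE i p s beta alpha <->
  compatible_pair alpha beta /\
  exists lam, is_linear lam /\ cobounds_chi alpha lam beta /\ cobounds_F alpha lam beta.
Proof.
case=> beta_lin beta_bij beta_NM [alpha_lin alpha_bij alpha_mul alpha_N].
split=> [[phi [[[phi_lin _ phi_mul phi_N] _] [phi_i phi_s]]] |].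
  pose lam a := mpart (phi (s a)).
  have lam_lin : is_linear lam := is_linear_comp mpart_lin (is_linear_comp phi_lin s_lin).
  have phiE := aut_ext_mapE phi_lin phi_i phi_s.
  have [compat chi_cob] : compatible_pair alpha beta /\ cobounds_chi alpha lam beta.
    by apply/(ext_map_mulP alpha_lin lam_lin beta_lin alpha_mul) => x y; rewrite -!phiE.
  split=> //; exists lam; do !split=> //.
  by apply/(ext_map_NEP alpha_lin lam_lin beta_lin alpha_N beta_NM) => x; rewrite -!phiE.
case=> compat [lam [lam_lin [chi_cob F_cob]]].
exists (ext_map alpha lam beta); do !split.
- exact: ext_map_lin.
- exact: ext_map_bij.
- exact/ext_map_mulP.
- exact/ext_map_NEP.
- by move=> u; exists (beta u); rewrite ext_map_i.
- by move=> u; rewrite ext_map_i.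
- by move=> a; rewrite ext_map_s ?p_decomp.
Qed.

End AbelianExtension.

Theorem proposition5p1 (K : fieldType) (charK0 : [pchar K] =i pred0)
  (A M E : lmodType K)
  (mul : A -> A -> A) (N : A -> A)
  (l : A -> M -> M) (r : M -> A -> M) (NM : M -> M)
  (mulE : E -> E -> E) (NE : E -> E) (i : M -> E) (p : E -> A)
  (s : A -> E) (chi : A -> A -> M) (F : A -> M)
  (HA : nijenhuis_alg mul N)
  (HM : nijenhuis_bimodule mul N l r NM)
  (HE : abelian_extension mul N NM mulE NE i p)
  (Hs : linear_section p s)
  (* the induced bimodule structure on M (= i(M)) is the given one *)
  (Hl : forall a u, mulE (s a) (i u) = i (l a u))
  (Hr : forall a u, mulE (i u) (s a) = i (r u a))
  (* the 2-cocycle (chi, F) associated with s *)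
  (Hchi : forall a b, i (chi a b) = mulE (s a) (s b) - s (mul a b))
  (HF : forall a, i (F a) = NE (s a) - s (N a))
  (beta : M -> M) (alpha : A -> A)
  (Hbeta : nijenhuis_mod_aut NM beta)
  (Halpha : nijenhuis_alg_aut mul N alpha) :
  inducible mulE NE i p s beta alpha <->
  ((forall a u, beta (l a u) = l (alpha a) (beta u)) /\
   (forall a u, beta (r u a) = r (beta u) (alpha a))) /\
  (exists lambda : A -> M, is_linear lambda /\
     (forall a b, beta (chi a b) - chi (alpha a) (alpha b)
                  = l (alpha a) (lambda b) + r (lambda a) (alpha b) - lambda (mul a b)) /\
     (forall a, beta (F a) - F (alpha a) = NM (lambda a) - lambda (N a))).
Proof.
case: HE => [[[mulE_linl mulE_linr _] NE_lin _] i_lin p_lin [mulE_ii NE_i _ _]].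
case=> i_inj _ ker_p; case: Hs => s_lin p_s.
exact: inducibleP.
Qed.
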